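(* Fix $x> 0$, $y>0$. Suppose $B_\nu(x,y)$ is an upper (respectively lower) bound for $P_\nu(x,y)$ for every $\nu>0$. Then for every $\mu>0$ and every integer $n\ge 0$, $$B^{(n)}_{\mu}(x,y)=B_{\mu+n+1}(x,y)+e^{-x-y}\sum_{k=0}^{n}\left(\frac{y}{x}\right)^{\frac{\mu+k}{2}}I_{\mu+k}(2\sqrt{xy})$$ is an upper (respectively lower) bound for $P_\mu(x,y)$. If moreover $B_{\nu}(x,y)\to 0$ as $\nu\to+\infty$, then $B^{(n)}_\mu(x,y)\to P_\mu(x,y)$ as $n\to\infty$.
   Context: For $\mu>0$, $x>0$, $y\ge0$, the generalized Marcum $P$-function is $P_{\mu}(x,y)=x^{\frac12(1-\mu)}\int_0^{y} t^{\frac12(\mu-1)}e^{-t-x}I_{\mu-1}(2\sqrt{xt})\,dt$, where $I_\nu$ is the modified Bessel function of the first kind. *)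

From Stdlib Require Import Reals Arith Factorial.
From Coquelicot Require Import Coquelicot.
Open Scope R_scope.

Definition Gamma (s : R) : R :=
  RInt_gen (fun t => Rpower t (s - 1) * exp (- t))
           (at_right 0) (Rbar_locally p_infty).

Definition BesselI (nu z : R) : R :=
  Series (fun k : nat =>
    Rpower (z / 2) (2 * INR k + nu) / (INR (fact k) * Gamma (INR k + nu + 1))).

(* Generalized Marcum P-function:
   P_mu(x,y) = x^((1-mu)/2) int_0^y t^((mu-1)/2) e^(-t-x) I_(mu-1)(2 sqrt(x t)) dt,
   the integral taken as an improper Riemann integral from 0^+ to y
   (the integrand may be singular at 0 when 0 < mu < 1). *)
Definition MarcumP (mu x y : R) : R :=
  Rpower x ((1 - mu) / 2) *
  RInt_gen (fun t => Rpower t ((mu - 1) / 2) * exp (- t - x)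
                     * BesselI (mu - 1) (2 * sqrt (x * t)))
           (at_right 0) (at_point y).

Definition Bn (B : R -> R) (mu x y : R) (n : nat) : R :=
  B (mu + INR n + 1) +
  exp (- x - y) * sum_f_R0 (fun k =>
     Rpower (y / x) ((mu + INR k) / 2) * BesselI (mu + INR k) (2 * sqrt (x * y))) n.

(* Write S_nu(u) = sum_k u^k / (k! Gamma(k+nu+1)), so that I_nu(z) = (z/2)^nu S_nu(z^2/4) and
   P_nu(x,y) = e^-x int_0^y t^(nu-1) e^-t S_(nu-1)(x t) dt.  Since
   d/dt [t^mu e^-t S_mu(x t)] = t^(mu-1) e^-t S_(mu-1)(x t) - t^mu e^-t S_mu(x t),
   integrating over (0, y] gives the recurrence
   P_mu = P_(mu+1) + e^(-x-y) (y/x)^(mu/2) I_mu(2 sqrt(x y)), and iterating it n+1 times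
   P_mu = P_(mu+n+1) + (B^(n)_mu - B_(mu+n+1)).  The bounds on B^(n)_mu follow at once.
   For the limit, S_(nu-1)(u) <= e^u / Gamma(nu) gives P_(mu+n+1) = O(y^n / n!) -> 0. *)
From Stdlib Require Import Reals Lra Classical Factorial.
From Coquelicot Require Import Coquelicot.
Open Scope R_scope.

(** * Improper integrals of nonnegative functions *)

Lemma lub_approx (E : R -> Prop) : bound E -> (exists v, E v) ->
  exists l, is_lub E l /\ forall eps, 0 < eps -> exists v, E v /\ l - eps < v.
Proof.
  intros HB HE. destruct (completeness E HB HE) as [l Hl]. exists l. split; [exact Hl|].
  intros eps Heps. apply NNPP. intros Hno.
  enough (l <= l - eps) by lra.
  apply Hl. intros v Hv. apply Rnot_lt_le. intros Hlt. apply Hno. now exists v.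
Qed.

Lemma is_RInt_gen_at_right_0_nonneg (f : R -> R) (b M : R) : 0 < b ->
  (forall a, 0 < a <= b -> ex_RInt f a b) ->
  (forall t, 0 < t <= b -> 0 <= f t) ->
  (forall a, 0 < a <= b -> RInt f a b <= M) ->
  exists l, is_RInt_gen f (at_right 0) (at_point b) l /\ l <= M /\
    forall a, 0 < a <= b -> RInt f a b <= l.
Proof.
  intros Hb Hex Hpos HM.
  destruct (lub_approx (fun v => exists a, 0 < a <= b /\ v = RInt f a b)) as [l [Hl Happ]].
  { exists M. intros v [a [Ha ->]]. auto. }
  { exists (RInt f b b), b. split; [lra | reflexivity]. }
  assert (Hup : forall a, 0 < a <= b -> RInt f a b <= l).
  { intros a Ha. apply Hl. now exists a. }
  exists l. split; [| split; [apply Hl; intros v [a [Ha ->]]; auto | exact Hup]].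
  intros P [eps HP].
  destruct (Happ eps (cond_pos eps)) as [v [[a0 [Ha0 ->]] Hl0]].
  apply Filter_prod with (Q := fun a => 0 < a < a0) (R := fun c => c = b).
  - exists (mkposreal a0 (proj1 Ha0)). intros t Ht Ht0. split; [exact Ht0|].
    change (Rabs (t - 0) < a0) in Ht. rewrite Rminus_0_r, Rabs_pos_eq in Ht; lra.
  - reflexivity.
  - intros a c Ha ->. exists (RInt f a b). split; [apply (RInt_correct f a), Hex; lra |].
    apply HP.
    assert (Hsplit : RInt f a a0 + RInt f a0 b = RInt f a b).
    { apply (RInt_Chasles f a a0 b); [apply (ex_RInt_Chasles_1 f a a0 b); [lra | apply Hex; lra] | apply Hex; lra]. }
    assert (0 <= RInt f a a0).
    { apply RInt_ge_0; [lra | apply (ex_RInt_Chasles_1 f a a0 b); [lra | apply Hex; lra] |].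
      intros t Ht. apply Hpos. lra. }
    pose proof (Hup a ltac:(lra)).
    change (Rabs (RInt f a b - l) < eps). apply Rabs_def1; lra.
Qed.

Lemma is_RInt_gen_p_infty_nonneg (f : R -> R) (a M : R) :
  (forall b, a <= b -> ex_RInt f a b) ->
  (forall t, a <= t -> 0 <= f t) ->
  (forall b, a <= b -> RInt f a b <= M) ->
  exists l, is_RInt_gen f (at_point a) (Rbar_locally p_infty) l /\ l <= M /\
    forall b, a <= b -> RInt f a b <= l.
Proof.
  intros Hex Hpos HM.
  destruct (lub_approx (fun v => exists b, a <= b /\ v = RInt f a b)) as [l [Hl Happ]].
  { exists M. intros v [b [Hb ->]]. auto. }
  { exists (RInt f a a), a. split; [lra | reflexivity]. }
  assert (Hup : forall b, a <= b -> RInt f a b <= l).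
  { intros b Hb. apply Hl. now exists b. }
  exists l. split; [| split; [apply Hl; intros v [b [Hb ->]]; auto | exact Hup]].
  intros P [eps HP].
  destruct (Happ eps (cond_pos eps)) as [v [[b0 [Hb0 ->]] Hl0]].
  apply Filter_prod with (Q := fun c => c = a) (R := fun b => b0 < b).
  - reflexivity.
  - now exists b0.
  - intros c b -> Hb. exists (RInt f a b). split; [apply (RInt_correct f a), Hex; lra |].
    apply HP.
    assert (Hsplit : RInt f a b0 + RInt f b0 b = RInt f a b).
    { apply (RInt_Chasles f a b0 b); [apply Hex; lra | apply (ex_RInt_Chasles_2 f a b0 b); [lra | apply Hex; lra]]. }
    assert (0 <= RInt f b0 b).
    { apply RInt_ge_0; [lra | apply (ex_RInt_Chasles_2 f a b0 b); [lra | apply Hex; lra] |].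
      intros t Ht. apply Hpos. lra. }
    pose proof (Hup b ltac:(lra)).
    change (Rabs (RInt f a b - l) < eps). apply Rabs_def1; lra.
Qed.

Lemma Rpower_gt_0 p t : 0 < Rpower t p.
Proof. apply exp_pos. Qed.

Lemma Rpower_1_l p : Rpower 1 p = 1.
Proof. unfold Rpower. now rewrite ln_1, Rmult_0_r, exp_0. Qed.

Lemma is_derive_Rpower p t : 0 < t -> is_derive (fun u => Rpower u p) t (p * Rpower t (p - 1)).
Proof. intros Ht. apply is_derive_Reals, derivable_pt_lim_power, Ht. Qed.

Lemma continuous_Rpower p t : 0 < t -> continuous (fun u => Rpower u p) t.
Proof. intros Ht. apply (ex_derive_continuous (fun u => Rpower u p)). eexists. now apply is_derive_Rpower. Qed.

Lemma is_derive_exp_opp t : is_derive (fun u => exp (- u)) t (- exp (- t)).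
Proof. auto_derive; [exact I | ring]. Qed.

Lemma exp_opp_le_1 t : 0 < t -> exp (- t) <= 1.
Proof. intros Ht. rewrite <- exp_0. apply Rlt_le, exp_increasing. lra. Qed.

Lemma is_RInt_Rpower s a b : 0 < s -> 0 < a <= b ->
  is_RInt (fun t => Rpower t (s - 1)) a b ((Rpower b s - Rpower a s) / s).
Proof.
  intros Hs Hab.
  replace ((Rpower b s - Rpower a s) / s) with (/ s * Rpower b s - / s * Rpower a s) by (field; lra).
  apply (is_RInt_derive (fun t => / s * Rpower t s)).
  - intros t Ht. rewrite Rmin_left, Rmax_right in Ht by lra.
    pose proof (is_derive_scal _ t (/ s) _ (is_derive_Rpower s t ltac:(lra))) as D.
    now replace (/ s * (s * Rpower t (s - 1))) with (Rpower t (s - 1)) in D by (field; lra).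
  - intros t Ht. rewrite Rmin_left, Rmax_right in Ht by lra. apply continuous_Rpower. lra.
Qed.

(* The exponent p ln t - t/2 is maximal at t = 2p. *)
Definition Rpower_exp_half_const (p : R) := exp (Rmax 0 (p * ln (2 * p))).

Lemma Rpower_le_exp_half p t : 1 <= t -> Rpower t p <= Rpower_exp_half_const p * exp (t / 2).
Proof.
  intros Ht. unfold Rpower_exp_half_const, Rpower. rewrite <- exp_plus.
  apply Rlt_le, exp_increasing.
  pose proof (Rmax_l 0 (p * ln (2 * p))). pose proof (Rmax_r 0 (p * ln (2 * p))).
  destruct (Rle_or_lt p 0) as [Hp | Hp].
  - assert (0 <= ln t) by (rewrite <- ln_1; apply ln_le; lra). nra.
  - assert (Hsplit : ln t = ln (2 * p) + ln (t / (2 * p))).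
    { rewrite <- ln_mult by (try apply Rdiv_lt_0_compat; lra). f_equal. field. lra. }
    assert (ln (t / (2 * p)) <= t / (2 * p) - 1).
    { pose proof (exp_ineq1_le (ln (t / (2 * p)))) as E.
      rewrite exp_ln in E by (apply Rdiv_lt_0_compat; lra). lra. }
    assert (p * ln (t / (2 * p)) <= t / 2 - p).
    { apply Rle_trans with (p * (t / (2 * p) - 1)); [apply Rmult_le_compat_l; lra | right; field; lra]. }
    nra.
Qed.

Lemma Rpower_mul_bounded_lim_at_right_0 s (g : R -> R) C : 0 < s ->
  (forall t, 0 < t <= 1 -> Rabs (g t) <= C) ->
  filterlim (fun t => Rpower t s * g t) (at_right 0) (locally 0).
Proof.
  intros Hs Hg P [eps HP].
  set (C' := Rabs C + 1).
  assert (HC' : 0 < C') by (unfold C'; pose proof (Rabs_pos C); lra).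
  assert (He : 0 < eps / C') by (apply Rdiv_lt_0_compat; [apply cond_pos | lra]).
  set (d := Rmin 1 (Rpower (eps / C') (/ s))).
  assert (Hd : 0 < d) by (apply Rmin_pos; [lra | apply Rpower_gt_0]).
  exists (mkposreal d Hd). intros t Ht Ht0. apply HP.
  change (Rabs (t - 0) < d) in Ht. rewrite Rminus_0_r, Rabs_pos_eq in Ht by lra.
  pose proof (Rmin_l 1 (Rpower (eps / C') (/ s))). pose proof (Rmin_r 1 (Rpower (eps / C') (/ s))).
  assert (Hp : Rpower t s < eps / C').
  { replace (eps / C') with (Rpower (Rpower (eps / C') (/ s)) s).
    - apply Rlt_Rpower_l; unfold d in Ht; lra.
    - rewrite Rpower_mult. replace (/ s * s) with 1 by (field; lra). now apply Rpower_1. }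
  assert (Rabs (g t) <= C') by (pose proof (Hg t ltac:(unfold d in Ht; lra)); pose proof (Rle_abs C); unfold C'; lra).
  change (Rabs (Rpower t s * g t - 0) < eps).
  rewrite Rminus_0_r, Rabs_mult, (Rabs_pos_eq (Rpower t s)) by apply Rlt_le, Rpower_gt_0.
  apply Rle_lt_trans with (Rpower t s * C'); [apply Rmult_le_compat_l; [apply Rlt_le, Rpower_gt_0 | auto] |].
  replace (pos eps) with (eps / C' * C') by (field; lra).
  apply Rmult_lt_compat_r; lra.
Qed.

Lemma Rpower_mul_exp_opp_lim_p_infty s :
  filterlim (fun t => Rpower t s * exp (- t)) (Rbar_locally p_infty) (locally 0).
Proof.
  intros P [eps HP].
  set (K := Rpower_exp_half_const s).
  assert (HK : 0 < K) by apply exp_pos.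
  set (q := eps / (K + 1)).
  assert (Hq : 0 < q) by (apply Rdiv_lt_0_compat; [apply cond_pos | lra]).
  exists (Rmax 1 (- 2 * ln q)). intros t Ht. apply HP.
  pose proof (Rmax_l 1 (- 2 * ln q)). pose proof (Rmax_r 1 (- 2 * ln q)).
  change (Rabs (Rpower t s * exp (- t) - 0) < eps).
  rewrite Rminus_0_r, Rabs_pos_eq by (apply Rlt_le, Rmult_lt_0_compat; [apply Rpower_gt_0 | apply exp_pos]).
  apply Rle_lt_trans with (K * exp (t / 2) * exp (- t)).
  { apply Rmult_le_compat_r; [apply Rlt_le, exp_pos | apply Rpower_le_exp_half; lra]. }
  rewrite Rmult_assoc, <- exp_plus.
  assert (exp (t / 2 + - t) < q) by (rewrite <- (exp_ln q) by lra; apply exp_increasing; lra).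
  assert ((K + 1) * q = eps) by (unfold q; field; lra).
  nra.
Qed.

Lemma filter_prod_at_right_0_pos (Fb : (R -> Prop) -> Prop) {FFb : Filter Fb} :
  Fb (fun b => 0 < b) ->
  filter_prod (at_right 0) Fb (fun ab => forall t, Rmin (fst ab) (snd ab) <= t -> 0 < t).
Proof.
  intros Hb. apply Filter_prod with (Q := fun a => 0 < a) (R := fun b => 0 < b);
    [now exists (mkposreal 1 Rlt_0_1) | exact Hb |].
  intros a b Ha Hb' t Ht. simpl in Ht. pose proof (Rmin_glb_lt a b 0 Ha Hb'). lra.
Qed.

Lemma is_RInt_gen_derive_at_right_0 (F f : R -> R) (Fb : (R -> Prop) -> Prop) {FFb : Filter Fb}
  (la lb : R) :
  Fb (fun b => 0 < b) ->
  (forall t, 0 < t -> is_derive F t (f t)) ->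
  (forall t, 0 < t -> continuous f t) ->
  filterlim F (at_right 0) (locally la) -> filterlim F Fb (locally lb) ->
  is_RInt_gen f (at_right 0) Fb (lb - la).
Proof.
  intros Hb HF Hf Hla Hlb.
  assert (HD : forall t, 0 < t -> Derive F t = f t) by (intros t Ht; now apply is_derive_unique, HF).
  pose proof (filter_prod_at_right_0_pos Fb Hb) as Hpos.
  apply (is_RInt_gen_ext (V := R_NormedModule) (Derive F)).
  { revert Hpos. apply filter_imp. intros ab Hab t Ht. apply HD, Hab. lra. }
  apply is_RInt_gen_Derive; [| | exact Hla | exact Hlb]; revert Hpos; apply filter_imp.
  - intros ab Hab t Ht. eexists. apply HF, Hab, Ht.
  - intros ab Hab t Ht. assert (Ht0 : 0 < t) by (apply Hab, Ht).
    apply continuous_ext_loc with f; [| now apply Hf].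
    exists (mkposreal t Ht0). intros u Hu. change (Rabs (u - t) < t) in Hu.
    apply Rabs_def2 in Hu. symmetry. apply HD. lra.
Qed.

(** * The Gamma function *)

Definition Gamma_integrand (s t : R) := Rpower t (s - 1) * exp (- t).

Lemma Gamma_integrand_gt_0 s t : 0 < Gamma_integrand s t.
Proof. apply Rmult_lt_0_compat; [apply Rpower_gt_0 | apply exp_pos]. Qed.

Lemma continuous_Gamma_integrand s t : 0 < t -> continuous (Gamma_integrand s) t.
Proof.
  intros Ht. apply (continuous_mult (fun u => Rpower u (s - 1)) (fun u => exp (- u)));
    [now apply continuous_Rpower |].
  apply (ex_derive_continuous (fun u => exp (- u))). eexists. apply is_derive_exp_opp.
Qed.

Lemma ex_RInt_Gamma_integrand s a b : 0 < a <= b -> ex_RInt (Gamma_integrand s) a b.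
Proof.
  intros Hab. apply (ex_RInt_continuous (V := R_CompleteNormedModule)). intros t Ht.
  rewrite Rmin_left, Rmax_right in Ht by lra. apply continuous_Gamma_integrand. lra.
Qed.

Lemma RInt_Gamma_integrand_le_0_1 s a : 0 < s -> 0 < a <= 1 -> RInt (Gamma_integrand s) a 1 <= 1 / s.
Proof.
  intros Hs Ha.
  apply Rle_trans with (RInt (fun t => Rpower t (s - 1)) a 1).
  - apply RInt_le; [lra | now apply ex_RInt_Gamma_integrand | eexists; apply is_RInt_Rpower; lra |].
    intros t Ht. unfold Gamma_integrand. rewrite <- (Rmult_1_r (Rpower t (s - 1))) at 2.
    apply Rmult_le_compat_l; [apply Rlt_le, Rpower_gt_0 | apply exp_opp_le_1; lra].
  - rewrite (is_RInt_unique _ _ _ _ (is_RInt_Rpower s a 1 Hs Ha)), Rpower_1_l.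
    pose proof (Rpower_gt_0 s a).
    unfold Rdiv. apply Rmult_le_compat_r; [apply Rlt_le, Rinv_0_lt_compat |]; lra.
Qed.

Lemma RInt_Gamma_integrand_le_1_p_infty s b : 1 <= b ->
  RInt (Gamma_integrand s) 1 b <= 2 * Rpower_exp_half_const (s - 1).
Proof.
  intros Hb. set (K := Rpower_exp_half_const (s - 1)).
  assert (HK : 0 < K) by apply exp_pos.
  assert (HI : is_RInt (fun t => K * exp (- t / 2)) 1 b (2 * K * exp (- 1 / 2) - 2 * K * exp (- b / 2))).
  { replace (2 * K * exp (- 1 / 2) - 2 * K * exp (- b / 2))
      with (- 2 * K * exp (- b / 2) - - 2 * K * exp (- 1 / 2)) by ring.
    apply (is_RInt_derive (fun t => - 2 * K * exp (- t / 2))).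
    - intros t _. auto_derive; [exact I | unfold Rdiv; field].
    - intros t _. apply (ex_derive_continuous (V := R_NormedModule)). auto_derive. exact I. }
  apply Rle_trans with (RInt (fun t => K * exp (- t / 2)) 1 b).
  - apply RInt_le; [lra | apply ex_RInt_Gamma_integrand; lra | eexists; exact HI |].
    intros t Ht. unfold Gamma_integrand.
    apply Rle_trans with (K * exp (t / 2) * exp (- t)).
    + apply Rmult_le_compat_r; [apply Rlt_le, exp_pos | apply Rpower_le_exp_half; lra].
    + rewrite Rmult_assoc, <- exp_plus. right. do 2 f_equal. field.
  - rewrite (is_RInt_unique _ _ _ _ HI).
    pose proof (exp_opp_le_1 (1 / 2) ltac:(lra)). pose proof (exp_pos (- b / 2)).
    replace (- 1 / 2) with (- (1 / 2)) by field. nra.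
Qed.

Lemma is_RInt_gen_Gamma s : 0 < s ->
  is_RInt_gen (Gamma_integrand s) (at_right 0) (Rbar_locally p_infty) (Gamma s) /\ 0 < Gamma s.
Proof.
  intros Hs.
  destruct (is_RInt_gen_at_right_0_nonneg (Gamma_integrand s) 1 (1 / s) Rlt_0_1)
    as [l0 [H0 [_ H0']]].
  { intros a Ha. apply ex_RInt_Gamma_integrand. lra. }
  { intros t _. apply Rlt_le, Gamma_integrand_gt_0. }
  { intros a Ha. now apply RInt_Gamma_integrand_le_0_1. }
  destruct (is_RInt_gen_p_infty_nonneg (Gamma_integrand s) 1 (2 * Rpower_exp_half_const (s - 1)))
    as [l1 [H1 [_ H1']]].
  { intros b Hb. apply ex_RInt_Gamma_integrand. lra. }
  { intros t _. apply Rlt_le, Gamma_integrand_gt_0. }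
  { intros b Hb. now apply RInt_Gamma_integrand_le_1_p_infty. }
  assert (Hall : is_RInt_gen (Gamma_integrand s) (at_right 0) (Rbar_locally p_infty) (plus l0 l1))
    by (apply (is_RInt_gen_Chasles (Gamma_integrand s) 1); assumption).
  replace (Gamma s) with (plus l0 l1) by (symmetry; apply is_RInt_gen_unique, Hall).
  split; [exact Hall |].
  assert (0 <= l0).
  { apply Rle_trans with (RInt (Gamma_integrand s) 1 1); [rewrite RInt_point; right; reflexivity |].
    apply H0'. lra. }
  assert (0 < l1).
  { apply Rlt_le_trans with (RInt (Gamma_integrand s) 1 2); [| apply H1'; lra].
    apply RInt_gt_0; [lra | intros; apply Gamma_integrand_gt_0 |].
    intros t Ht. apply continuous_Gamma_integrand. lra. }
  change (0 < l0 + l1). lra.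
Qed.

Lemma Gamma_gt_0 s : 0 < s -> 0 < Gamma s.
Proof. intros Hs. apply (is_RInt_gen_Gamma s Hs). Qed.

Lemma Gamma_succ s : 0 < s -> Gamma (s + 1) = s * Gamma s.
Proof.
  intros Hs.
  set (dphi t := s * Gamma_integrand s t - Gamma_integrand (s + 1) t).
  assert (Hdphi : is_RInt_gen dphi (at_right 0) (Rbar_locally p_infty) (0 - 0)).
  { apply (is_RInt_gen_derive_at_right_0 (fun t => Rpower t s * exp (- t)) dphi (Rbar_locally p_infty));
      [now exists 0 | | | |].
    - intros t Ht. unfold dphi, Gamma_integrand. replace (s + 1 - 1) with s by ring.
      replace (s * (Rpower t (s - 1) * exp (- t)) - Rpower t s * exp (- t))
        with (s * Rpower t (s - 1) * exp (- t) + Rpower t s * (- exp (- t))) by ring.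
      apply (is_derive_mult (fun u => Rpower u s) (fun u => exp (- u)));
        [now apply is_derive_Rpower | apply is_derive_exp_opp | intros; apply Rmult_comm].
    - intros t Ht. apply (continuous_minus (fun u => s * Gamma_integrand s u) (Gamma_integrand (s + 1))).
      + apply (continuous_scal_r s (Gamma_integrand s)). now apply continuous_Gamma_integrand.
      + now apply continuous_Gamma_integrand.
    - apply (Rpower_mul_bounded_lim_at_right_0 s (fun t => exp (- t)) 1 Hs).
      intros t Ht. rewrite Rabs_pos_eq by apply Rlt_le, exp_pos. apply exp_opp_le_1. lra.
    - apply Rpower_mul_exp_opp_lim_p_infty. }
  pose proof (is_RInt_gen_minus _ _ _ _
    (is_RInt_gen_scal _ s _ (proj1 (is_RInt_gen_Gamma s Hs))) Hdphi) as HM.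
  apply is_RInt_gen_unique.
  replace (s * Gamma s) with (minus (scal s (Gamma s)) (0 - 0))
    by (unfold minus, plus, opp, scal; simpl; unfold mult; simpl; ring).
  revert HM. apply is_RInt_gen_ext, filter_forall. intros ab t _.
  unfold dphi, Gamma_integrand, minus, plus, opp, scal; simpl. unfold mult; simpl. ring.
Qed.

Lemma fact_gt_0 k : 0 < INR (fact k).
Proof. apply lt_0_INR, lt_O_fact. Qed.

Lemma Gamma_mul_fact_le s k : 1 <= s -> Gamma s * INR (fact k) <= Gamma (s + INR k).
Proof.
  intros Hs. induction k as [|k IH].
  - simpl. rewrite Rplus_0_r. lra.
  - rewrite S_INR, fact_simpl, mult_INR, S_INR.
    replace (s + (INR k + 1)) with (s + INR k + 1) by ring.
    pose proof (pos_INR k). rewrite Gamma_succ by lra.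
    pose proof (Gamma_gt_0 s ltac:(lra)). pose proof (fact_gt_0 k).
    assert (0 <= Gamma s * INR (fact k)) by nra.
    nra.
Qed.

(** * The series of the Bessel function *)

Definition bessel_coef (nu : R) (k : nat) := / (INR (fact k) * Gamma (INR k + nu + 1)).

Definition bessel_series (nu u : R) := PSeries (bessel_coef nu) u.

Lemma bessel_coef_gt_0 nu k : -1 < nu -> 0 < bessel_coef nu k.
Proof.
  intros Hnu. apply Rinv_0_lt_compat, Rmult_lt_0_compat; [apply fact_gt_0 |].
  apply Gamma_gt_0. pose proof (pos_INR k). lra.
Qed.

Lemma bessel_coef_pred mu k : 0 < mu -> (mu + INR k) * bessel_coef mu k = bessel_coef (mu - 1) k.
Proof.
  intros Hmu. unfold bessel_coef.
  replace (INR k + mu + 1) with (INR k + (mu - 1) + 1 + 1) by ring.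
  pose proof (pos_INR k). rewrite Gamma_succ by lra.
  replace (INR k + (mu - 1) + 1) with (mu + INR k) by ring.
  pose proof (fact_gt_0 k). pose proof (Gamma_gt_0 (mu + INR k) ltac:(lra)).
  field. lra.
Qed.

Lemma bessel_coef_ratio nu k : -1 < nu ->
  bessel_coef nu (S k) / bessel_coef nu k = / ((INR k + 1) * (INR k + nu + 1)).
Proof.
  intros Hnu. unfold bessel_coef. rewrite S_INR, fact_simpl, mult_INR, S_INR.
  replace (INR k + 1 + nu + 1) with (INR k + nu + 1 + 1) by ring.
  pose proof (pos_INR k). rewrite Gamma_succ by lra.
  pose proof (fact_gt_0 k). pose proof (Gamma_gt_0 (INR k + nu + 1) ltac:(lra)).
  field. repeat split; lra.
Qed.

Lemma CV_radius_bessel_coef nu : -1 < nu -> CV_radius (bessel_coef nu) = p_infty.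
Proof.
  intros Hnu. apply CV_radius_infinite_DAlembert.
  - intros n. apply Rgt_not_eq, bessel_coef_gt_0, Hnu.
  - apply is_lim_seq_le_le with (u := fun _ => 0) (w := fun n => / (nu + 1) * / (INR n + 1)).
    + intros n. rewrite bessel_coef_ratio by exact Hnu. pose proof (pos_INR n).
      rewrite Rabs_pos_eq by (apply Rlt_le, Rinv_0_lt_compat; nra).
      split; [apply Rlt_le, Rinv_0_lt_compat; nra |].
      rewrite <- Rinv_mult. apply Rinv_le_contravar; nra.
    + apply is_lim_seq_const.
    + replace (Finite 0) with (Rbar_mult (/ (nu + 1)) 0) by (simpl; f_equal; ring).
      apply is_lim_seq_scal_l.
      replace (Finite 0) with (Rbar_inv p_infty) by reflexivity.
      apply is_lim_seq_inv; [| discriminate].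
      apply is_lim_seq_ext with (fun n => INR (S n)); [intros n; apply S_INR |].
      apply (is_lim_seq_incr_1 INR p_infty), is_lim_seq_INR.
Qed.

Lemma ex_pseries_bessel_coef nu u : -1 < nu -> ex_pseries (bessel_coef nu) u.
Proof. intros H. apply CV_radius_inside. now rewrite CV_radius_bessel_coef. Qed.

Lemma ex_pseries_derive_bessel_coef nu u : -1 < nu -> ex_pseries (PS_derive (bessel_coef nu)) u.
Proof. intros H. apply CV_radius_inside. now rewrite CV_radius_derive, CV_radius_bessel_coef. Qed.

Lemma is_derive_bessel_series nu u : -1 < nu ->
  is_derive (bessel_series nu) u (PSeries (PS_derive (bessel_coef nu)) u).
Proof. intros H. apply is_derive_PSeries. now rewrite CV_radius_bessel_coef. Qed.

Lemma ex_series_of_ex_pseries (a : nat -> R) u : ex_pseries a u -> ex_series (fun k => a k * u ^ k).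
Proof. apply ex_series_ext. intros n. rewrite pow_n_pow. apply Rmult_comm. Qed.

Lemma bessel_series_le nu u v : -1 < nu -> 0 <= u <= v -> bessel_series nu u <= bessel_series nu v.
Proof.
  intros H Huv. apply Series_le.
  - intros n. pose proof (bessel_coef_gt_0 nu n H). split.
    + apply Rmult_le_pos; [lra | apply pow_le; lra].
    + apply Rmult_le_compat_l; [lra | apply pow_incr; lra].
  - now apply ex_series_of_ex_pseries, ex_pseries_bessel_coef.
Qed.

Lemma bessel_series_gt_0 nu u : -1 < nu -> 0 <= u -> 0 < bessel_series nu u.
Proof.
  intros H Hu. apply Rlt_le_trans with (bessel_series nu 0).
  - unfold bessel_series. rewrite PSeries_0. now apply bessel_coef_gt_0.
  - apply bessel_series_le; lra.
Qed.

Lemma bessel_series_le_exp nu u : 1 <= nu -> 0 <= u -> bessel_series (nu - 1) u <= exp u / Gamma nu.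
Proof.
  intros Hnu Hu. pose proof (Gamma_gt_0 nu ltac:(lra)) as HG.
  unfold Rdiv. rewrite Rmult_comm, exp_Reals. unfold PSeries, bessel_series.
  rewrite <- Series_scal_l. apply Series_le.
  - intros k. pose proof (bessel_coef_gt_0 (nu - 1) k ltac:(lra)). split.
    + apply Rmult_le_pos; [lra | apply pow_le; lra].
    + rewrite <- Rmult_assoc. apply Rmult_le_compat_r; [apply pow_le; lra |].
      unfold bessel_coef. replace (INR k + (nu - 1) + 1) with (nu + INR k) by ring.
      pose proof (fact_gt_0 k). pose proof (Gamma_mul_fact_le nu k Hnu).
      rewrite Rinv_mult, Rmult_comm. apply Rmult_le_compat_r; [apply Rlt_le, Rinv_0_lt_compat; lra |].
      apply Rinv_le_contravar; [lra |].
      assert (1 <= INR (fact k)) by (apply (le_INR 1), lt_O_fact). nra.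
  - apply (ex_series_scal_l (/ Gamma nu) (fun k => / INR (fact k) * u ^ k)).
    apply ex_series_of_ex_pseries. eexists. apply is_exp_Reals.
Qed.

Lemma bessel_series_pred mu u : 0 < mu ->
  mu * bessel_series mu u + u * PSeries (PS_derive (bessel_coef mu)) u = bessel_series (mu - 1) u.
Proof.
  intros Hmu. unfold bessel_series.
  rewrite <- PSeries_incr_1, <- PSeries_scal, <- PSeries_plus.
  - apply PSeries_ext. intros k. rewrite <- bessel_coef_pred by exact Hmu.
    unfold PS_plus, PS_scal, PS_incr_1, PS_derive.
    destruct k as [|k]; unfold plus, scal, zero; simpl; unfold mult; simpl; ring.
  - apply ex_pseries_scal; [apply Rmult_comm | apply ex_pseries_bessel_coef; lra].
  - apply ex_pseries_incr_1, ex_pseries_derive_bessel_coef. lra.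
Qed.

Lemma BesselI_eq nu z : 0 < z -> BesselI nu z = Rpower (z / 2) nu * bessel_series nu ((z / 2) ^ 2).
Proof.
  intros Hz. unfold BesselI, bessel_series, PSeries. rewrite <- Series_scal_l.
  apply Series_ext. intros k.
  rewrite Rpower_plus. replace (2 * INR k) with (INR (2 * k)) by (rewrite mult_INR; reflexivity).
  rewrite Rpower_pow, pow_mult by lra. unfold bessel_coef, Rdiv. ring.
Qed.

(** * The Marcum function as an integral of the Bessel series *)

Definition marcum_integrand (x nu t : R) := Rpower t (nu - 1) * exp (- t) * bessel_series (nu - 1) (x * t).

Definition marcum_integral (x y nu : R) := RInt_gen (marcum_integrand x nu) (at_right 0) (at_point y).

Lemma continuous_marcum_integrand x nu t : 0 < nu -> 0 < t -> continuous (marcum_integrand x nu) t.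
Proof.
  intros Hnu Ht.
  apply (continuous_mult (Gamma_integrand nu) (fun u => bessel_series (nu - 1) (x * u))).
  - now apply continuous_Gamma_integrand.
  - apply (continuous_comp (fun u => x * u) (bessel_series (nu - 1))).
    + apply (ex_derive_continuous (V := R_NormedModule)). auto_derive. exact I.
    + apply (ex_derive_continuous (V := R_NormedModule)). eexists.
      apply is_derive_bessel_series. lra.
Qed.

Lemma marcum_integrand_ge_0 x nu t : 0 < nu -> 0 <= x -> 0 < t -> 0 <= marcum_integrand x nu t.
Proof.
  intros Hnu Hx Ht. apply Rmult_le_pos; [apply Rlt_le, Gamma_integrand_gt_0 |].
  apply Rlt_le, bessel_series_gt_0; nra.
Qed.

Lemma ex_RInt_marcum_integrand x nu a b : 0 < nu -> 0 < a <= b -> ex_RInt (marcum_integrand x nu) a b.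
Proof.
  intros Hnu Hab. apply (ex_RInt_continuous (V := R_CompleteNormedModule)). intros t Ht.
  rewrite Rmin_left, Rmax_right in Ht by lra. apply continuous_marcum_integrand; lra.
Qed.

(* S_(nu-1)(x t) <= S_(nu-1)(x y) on (0, y], and int_0^y t^(nu-1) dt = y^nu / nu. *)
Lemma is_RInt_gen_marcum_integral x y nu : 0 <= x -> 0 < y -> 0 < nu ->
  is_RInt_gen (marcum_integrand x nu) (at_right 0) (at_point y) (marcum_integral x y nu) /\
  0 <= marcum_integral x y nu <= bessel_series (nu - 1) (x * y) * (Rpower y nu / nu).
Proof.
  intros Hx Hy Hnu.
  set (c := bessel_series (nu - 1) (x * y)).
  assert (Hc : 0 < c) by (apply bessel_series_gt_0; nra).
  destruct (is_RInt_gen_at_right_0_nonneg (marcum_integrand x nu) y (c * (Rpower y nu / nu)) Hy)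
    as [l [Hl [HlM Hlow]]].
  { intros a Ha. apply ex_RInt_marcum_integrand; lra. }
  { intros t Ht. apply marcum_integrand_ge_0; lra. }
  { intros a Ha.
    assert (HI : is_RInt (fun t => c * Rpower t (nu - 1)) a y (c * ((Rpower y nu - Rpower a nu) / nu)))
      by (apply (is_RInt_scal (fun t => Rpower t (nu - 1))), is_RInt_Rpower; lra).
    apply Rle_trans with (RInt (fun t => c * Rpower t (nu - 1)) a y).
    - apply RInt_le; [lra | apply ex_RInt_marcum_integrand; lra | eexists; exact HI |].
      intros t Ht. unfold marcum_integrand. rewrite (Rmult_comm c).
      apply Rmult_le_compat;
        [apply Rlt_le, Gamma_integrand_gt_0 | apply Rlt_le, bessel_series_gt_0; nra | |].
      + rewrite <- (Rmult_1_r (Rpower t (nu - 1))) at 2.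
        apply Rmult_le_compat_l; [apply Rlt_le, Rpower_gt_0 | apply exp_opp_le_1; lra].
      + apply bessel_series_le; [lra | split; nra].
    - rewrite (is_RInt_unique _ _ _ _ HI). pose proof (Rpower_gt_0 nu a).
      apply Rmult_le_compat_l; [lra |].
      unfold Rdiv. apply Rmult_le_compat_r; [apply Rlt_le, Rinv_0_lt_compat |]; lra. }
  replace (marcum_integral x y nu) with l by (symmetry; apply is_RInt_gen_unique, Hl).
  split; [exact Hl | split; [| exact HlM]].
  apply Rle_trans with (RInt (marcum_integrand x nu) y y); [rewrite RInt_point; right; reflexivity |].
  apply Hlow. lra.
Qed.

Lemma marcum_integrand_eq x nu t : 0 < x -> 0 < t ->
  Rpower t ((nu - 1) / 2) * exp (- t - x) * BesselI (nu - 1) (2 * sqrt (x * t)) =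
  exp (- x) * Rpower x ((nu - 1) / 2) * marcum_integrand x nu t.
Proof.
  intros Hx Ht. assert (Hxt : 0 < x * t) by nra.
  rewrite BesselI_eq by (pose proof (sqrt_lt_R0 _ Hxt); lra).
  replace (2 * sqrt (x * t) / 2) with (sqrt (x * t)) by field.
  rewrite pow2_sqrt, <- Rpower_sqrt, Rpower_mult, <- Rpower_mult_distr by lra.
  unfold marcum_integrand.
  replace (Rpower t (nu - 1)) with (Rpower t ((nu - 1) / 2) * Rpower t (/ 2 * (nu - 1)))
    by (rewrite <- Rpower_plus; f_equal; field).
  replace (Rpower x (/ 2 * (nu - 1))) with (Rpower x ((nu - 1) / 2)) by (f_equal; field).
  replace (- t - x) with (- x + - t) by ring. rewrite exp_plus. ring.
Qed.

Lemma MarcumP_eq x y nu : 0 < x -> 0 < y -> 0 < nu -> MarcumP nu x y = exp (- x) * marcum_integral x y nu.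
Proof.
  intros Hx Hy Hnu.
  destruct (is_RInt_gen_marcum_integral x y nu ltac:(lra) Hy Hnu) as [HJ _].
  set (c := exp (- x) * Rpower x ((nu - 1) / 2)).
  assert (H : is_RInt_gen (fun t => Rpower t ((nu - 1) / 2) * exp (- t - x)
                 * BesselI (nu - 1) (2 * sqrt (x * t))) (at_right 0) (at_point y)
                (scal c (marcum_integral x y nu))).
  { refine (is_RInt_gen_ext (V := R_NormedModule) (fun t => scal c (marcum_integrand x nu t)) _ _ _ _).
    2: apply (is_RInt_gen_scal (V := R_NormedModule)); exact HJ.
    generalize (filter_prod_at_right_0_pos (at_point y) Hy). apply filter_imp. intros ab Hab t Ht.
    symmetry. apply marcum_integrand_eq; [exact Hx | apply Hab; lra]. }
  unfold MarcumP. rewrite (is_RInt_gen_unique _ _ H).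
  unfold scal; simpl; unfold mult; simpl. unfold c.
  transitivity (exp (- x) * (Rpower x ((1 - nu) / 2) * Rpower x ((nu - 1) / 2)) * marcum_integral x y nu);
    [ring |].
  rewrite <- Rpower_plus. replace ((1 - nu) / 2 + (nu - 1) / 2) with 0 by field.
  rewrite Rpower_O by lra. ring.
Qed.

(** * The recurrence in the order *)

Definition marcum_primitive (x mu t : R) := Rpower t mu * (exp (- t) * bessel_series mu (x * t)).

Lemma is_derive_marcum_primitive x mu t : 0 < mu -> 0 < t ->
  is_derive (marcum_primitive x mu) t (marcum_integrand x mu t - marcum_integrand x (mu + 1) t).
Proof.
  intros Hmu Ht.
  set (dS := PSeries (PS_derive (bessel_coef mu)) (x * t)).
  assert (DS : is_derive (fun u => bessel_series mu (x * u)) t (x * dS)).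
  { apply (is_derive_comp (bessel_series mu) (fun u => x * u)).
    - apply is_derive_bessel_series. lra.
    - auto_derive; [exact I | ring]. }
  assert (D : is_derive (marcum_primitive x mu) t
     (mu * Rpower t (mu - 1) * (exp (- t) * bessel_series mu (x * t)) +
      Rpower t mu * (- exp (- t) * bessel_series mu (x * t) + exp (- t) * (x * dS)))).
  { apply (is_derive_mult (fun u => Rpower u mu) (fun u => exp (- u) * bessel_series mu (x * u)));
      [now apply is_derive_Rpower | | intros; apply Rmult_comm].
    apply (is_derive_mult (fun u => exp (- u)) (fun u => bessel_series mu (x * u)));
      [apply is_derive_exp_opp | exact DS | intros; apply Rmult_comm]. }
  replace (marcum_integrand x mu t - marcum_integrand x (mu + 1) t) with
    (mu * Rpower t (mu - 1) * (exp (- t) * bessel_series mu (x * t)) +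
     Rpower t mu * (- exp (- t) * bessel_series mu (x * t) + exp (- t) * (x * dS)));
    [exact D |].
  unfold marcum_integrand, dS. replace (mu + 1 - 1) with mu by ring.
  rewrite <- bessel_series_pred by exact Hmu.
  assert (E : Rpower t mu = Rpower t (mu - 1) * Rpower t 1) by (rewrite <- Rpower_plus; f_equal; ring).
  rewrite Rpower_1 in E by exact Ht. rewrite E. ring.
Qed.

Lemma marcum_integral_succ x y mu : 0 < x -> 0 < y -> 0 < mu ->
  marcum_integral x y mu = marcum_integral x y (mu + 1) + marcum_primitive x mu y.
Proof.
  intros Hx Hy Hmu.
  destruct (is_RInt_gen_marcum_integral x y (mu + 1) ltac:(lra) Hy ltac:(lra)) as [HJ _].
  assert (HD : is_RInt_gen (fun t => marcum_integrand x mu t - marcum_integrand x (mu + 1) t)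
                 (at_right 0) (at_point y) (marcum_primitive x mu y - 0)).
  { apply (is_RInt_gen_derive_at_right_0 (marcum_primitive x mu) _ (at_point y)); [exact Hy | | | |].
    - intros t Ht. now apply is_derive_marcum_primitive.
    - intros t Ht. apply (continuous_minus (marcum_integrand x mu) (marcum_integrand x (mu + 1)));
        apply continuous_marcum_integrand; lra.
    - apply (Rpower_mul_bounded_lim_at_right_0 mu (fun t => exp (- t) * bessel_series mu (x * t))
               (bessel_series mu x) Hmu).
      intros t Ht. pose proof (bessel_series_gt_0 mu (x * t) ltac:(lra) ltac:(nra)).
      rewrite Rabs_pos_eq by (apply Rlt_le, Rmult_lt_0_compat; [apply exp_pos | lra]).
      rewrite <- (Rmult_1_l (bessel_series mu x)).
      apply Rmult_le_compat; [apply Rlt_le, exp_pos | lra | apply exp_opp_le_1; lra |].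
      apply bessel_series_le; [lra | split; nra].
    - intros P HP. exact (locally_singleton _ _ HP). }
  apply is_RInt_gen_unique.
  replace (marcum_integral x y (mu + 1) + marcum_primitive x mu y)
    with (plus (marcum_integral x y (mu + 1)) (marcum_primitive x mu y - 0))
    by (unfold plus; simpl; ring).
  pose proof (is_RInt_gen_plus _ _ _ _ HJ HD) as HS.
  refine (is_RInt_gen_ext (V := R_NormedModule) _ _ _ _ HS).
  apply filter_forall. intros ab t _. unfold plus; simpl. ring.
Qed.

Lemma bessel_term_eq x y nu : 0 < x -> 0 < y ->
  exp (- x - y) * (Rpower (y / x) (nu / 2) * BesselI nu (2 * sqrt (x * y))) =
  exp (- x) * marcum_primitive x nu y.
Proof.
  intros Hx Hy.
  assert (Hxy : 0 < x * y) by nra. pose proof (sqrt_lt_R0 _ Hxy).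
  rewrite BesselI_eq by lra.
  replace (2 * sqrt (x * y) / 2) with (sqrt (x * y)) by field.
  rewrite pow2_sqrt, <- Rpower_sqrt, Rpower_mult, <- Rpower_mult_distr by lra.
  unfold Rdiv at 1. rewrite <- Rpower_mult_distr by (try apply Rinv_0_lt_compat; lra).
  assert (Hinv : Rpower (/ x) (nu / 2) = / Rpower x (nu / 2)).
  { unfold Rpower. rewrite ln_Rinv, <- exp_Ropp by lra. f_equal. ring. }
  assert (Hy2 : Rpower y nu = Rpower y (nu / 2) * Rpower y (nu / 2))
    by (rewrite <- Rpower_plus; f_equal; field).
  rewrite Hinv. replace (/ 2 * nu) with (nu / 2) by field.
  unfold marcum_primitive. rewrite Hy2.
  replace (- x - y) with (- x + - y) by ring. rewrite exp_plus.
  pose proof (Rpower_gt_0 (nu / 2) x). field. lra.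
Qed.

Lemma MarcumP_succ x y nu : 0 < x -> 0 < y -> 0 < nu ->
  MarcumP nu x y = MarcumP (nu + 1) x y +
    exp (- x - y) * (Rpower (y / x) (nu / 2) * BesselI nu (2 * sqrt (x * y))).
Proof.
  intros Hx Hy Hnu.
  rewrite bessel_term_eq, !MarcumP_eq, marcum_integral_succ by lra. ring.
Qed.

Lemma MarcumP_telescope x y mu n : 0 < x -> 0 < y -> 0 < mu ->
  MarcumP mu x y = MarcumP (mu + INR n + 1) x y + exp (- x - y) * sum_f_R0 (fun k =>
    Rpower (y / x) ((mu + INR k) / 2) * BesselI (mu + INR k) (2 * sqrt (x * y))) n.
Proof.
  intros Hx Hy Hmu. induction n as [|n IH].
  - simpl. rewrite !Rplus_0_r. now apply MarcumP_succ.
  - rewrite tech5, S_INR, IH. pose proof (pos_INR n).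
    rewrite (MarcumP_succ x y (mu + INR n + 1)) by lra.
    replace (mu + INR n + 1) with (mu + (INR n + 1)) by ring. ring.
Qed.

(** * Decay of the Marcum function in the order *)

Lemma MarcumP_ge_0 x y nu : 0 < x -> 0 < y -> 0 < nu -> 0 <= MarcumP nu x y.
Proof.
  intros Hx Hy Hnu. rewrite MarcumP_eq by lra.
  destruct (is_RInt_gen_marcum_integral x y nu ltac:(lra) Hy Hnu) as [_ [HJ _]].
  pose proof (exp_pos (- x)). nra.
Qed.

Lemma MarcumP_le x y nu : 0 < x -> 0 < y -> 1 <= nu ->
  MarcumP nu x y <= exp (- x) * exp (x * y) * Rpower y nu / Gamma (nu + 1).
Proof.
  intros Hx Hy Hnu. rewrite MarcumP_eq by lra.
  destruct (is_RInt_gen_marcum_integral x y nu ltac:(lra) Hy ltac:(lra)) as [_ [_ HJ]].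
  pose proof (bessel_series_le_exp nu (x * y) Hnu ltac:(nra)).
  pose proof (Gamma_gt_0 nu ltac:(lra)). pose proof (Rpower_gt_0 nu y).
  pose proof (exp_pos (- x)). pose proof (exp_pos (x * y)).
  rewrite Gamma_succ by lra.
  transitivity (exp (- x) * ((exp (x * y) / Gamma nu) * (Rpower y nu / nu))).
  - apply Rmult_le_compat_l; [lra |]. apply (Rle_trans _ _ _ HJ).
    apply Rmult_le_compat_r; [apply Rlt_le, Rdiv_lt_0_compat |]; lra.
  - right. field. lra.
Qed.

(* P_(mu+n+1) <= C y^(n+1) / (n+1)!, the general term of a convergent exponential series. *)
Lemma MarcumP_shift_lim_0 x y mu : 0 < x -> 0 < y -> 0 < mu ->
  is_lim_seq (fun n => MarcumP (mu + INR n + 1) x y) 0.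
Proof.
  intros Hx Hy Hmu.
  set (C := exp (- x) * exp (x * y) * Rpower y mu / Gamma (mu + 1)).
  apply is_lim_seq_le_le with (u := fun _ => 0) (w := fun n => C * (/ INR (fact (S n)) * y ^ S n)).
  - intros n. pose proof (pos_INR n). split; [apply MarcumP_ge_0; lra |].
    apply (Rle_trans _ _ _ (MarcumP_le x y (mu + INR n + 1) Hx Hy ltac:(lra))).
    pose proof (Gamma_mul_fact_le (mu + 1) (S n) ltac:(lra)) as HF.
    replace (mu + 1 + INR (S n)) with (mu + INR n + 1 + 1) in HF by (rewrite S_INR; ring).
    assert (Hpow : Rpower y (mu + INR n + 1) = Rpower y mu * y ^ S n).
    { rewrite <- Rpower_pow, <- Rpower_plus by lra. f_equal. rewrite S_INR. ring. }
    pose proof (Gamma_gt_0 (mu + 1) ltac:(lra)). pose proof (fact_gt_0 (S n)).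
    pose proof (Rpower_gt_0 mu y). pose proof (pow_lt y (S n) Hy).
    pose proof (exp_pos (- x)). pose proof (exp_pos (x * y)).
    unfold C. rewrite Hpow.
    replace (exp (- x) * exp (x * y) * Rpower y mu / Gamma (mu + 1) * (/ INR (fact (S n)) * y ^ S n))
      with (exp (- x) * exp (x * y) * (Rpower y mu * y ^ S n) / (Gamma (mu + 1) * INR (fact (S n))))
      by (field; lra).
    unfold Rdiv. apply Rmult_le_compat_l; [apply Rmult_le_pos; nra |].
    apply Rinv_le_contravar; nra.
  - apply is_lim_seq_const.
  - replace (Finite 0) with (Rbar_mult C 0) by (simpl; f_equal; ring).
    apply is_lim_seq_scal_l.
    apply (is_lim_seq_incr_1 (fun n => / INR (fact n) * y ^ n)).
    apply ex_series_lim_0, ex_series_of_ex_pseries. eexists. apply is_exp_Reals.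
Qed.

Lemma is_lim_seq_comp_shift (B : R -> R) c : is_lim B p_infty 0 ->
  is_lim_seq (fun n => B (c + INR n + 1)) 0.
Proof.
  intros HB. apply (is_lim_comp_seq B (fun n => c + INR n + 1) p_infty 0 HB).
  - exists 0%nat. intros n _. discriminate.
  - apply is_lim_seq_ext with (fun n => INR n + (c + 1)); [intros n; ring |].
    apply (is_lim_seq_plus _ _ p_infty (c + 1)); [apply is_lim_seq_INR | apply is_lim_seq_const |].
    reflexivity.
Qed.

Lemma Bn_sub_MarcumP (B : R -> R) x y mu n : 0 < x -> 0 < y -> 0 < mu ->
  Bn B mu x y n - MarcumP mu x y = B (mu + INR n + 1) - MarcumP (mu + INR n + 1) x y.
Proof. intros Hx Hy Hmu. unfold Bn. rewrite (MarcumP_telescope x y mu n) by assumption. ring. Qed.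

Lemma is_lim_seq_Bn (B : R -> R) x y mu : 0 < x -> 0 < y -> 0 < mu -> is_lim B p_infty 0 ->
  is_lim_seq (fun n => Bn B mu x y n) (MarcumP mu x y).
Proof.
  intros Hx Hy Hmu HB.
  apply is_lim_seq_ext with
    (fun n => MarcumP mu x y + (B (mu + INR n + 1) - MarcumP (mu + INR n + 1) x y)).
  { intros n. rewrite <- Bn_sub_MarcumP by assumption. ring. }
  replace (Finite (MarcumP mu x y)) with (Finite (MarcumP mu x y + (0 - 0))) by (f_equal; ring).
  apply is_lim_seq_plus'; [apply is_lim_seq_const |].
  apply is_lim_seq_minus'; [now apply is_lim_seq_comp_shift | now apply MarcumP_shift_lim_0].
Qed.

Theorem proposition2 (x y : R) (hx : 0 < x) (hy : 0 < y) :
  (* upper bounds *)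
  (forall B : R -> R,
     (forall nu, 0 < nu -> MarcumP nu x y <= B nu) ->
     (forall mu, 0 < mu -> forall n : nat, MarcumP mu x y <= Bn B mu x y n) /\
     (is_lim B p_infty 0 ->
        forall mu, 0 < mu -> is_lim_seq (fun n => Bn B mu x y n) (MarcumP mu x y))) /\
  (* lower bounds *)
  (forall B : R -> R,
     (forall nu, 0 < nu -> B nu <= MarcumP nu x y) ->
     (forall mu, 0 < mu -> forall n : nat, Bn B mu x y n <= MarcumP mu x y) /\
     (is_lim B p_infty 0 ->
        forall mu, 0 < mu -> is_lim_seq (fun n => Bn B mu x y n) (MarcumP mu x y))).
Proof.
  split; intros B HB; split; try (intros HBlim mu Hmu; now apply is_lim_seq_Bn);
    intros mu Hmu n; pose proof (Bn_sub_MarcumP B x y mu n hx hy Hmu);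
    pose proof (HB (mu + INR n + 1) ltac:(pose proof (pos_INR n); lra)); lra.
Qed.
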